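(* Let $(X,\varrho)$ and $(Y,d)$ be metric spaces and $f\colon X\to Y$. In addition to all implications valid for topological $X$ (PCP $\Rightarrow$ fragmentable; fragmentable $\Rightarrow$ cliquish; fragmentable $\Rightarrow$ weakly separated; Lebesgue property $\Rightarrow$ generalized Lebesgue property; generalized Lebesgue property $\Rightarrow$ weakly separated and $\Rightarrow$ Borel 1; pointwise discontinuous $\Rightarrow$ cliquish; for $X$ Baire: generalized Lebesgue property $\Rightarrow$ cliquish and cliquish $\Rightarrow$ pointwise discontinuous; for $X$ hereditarily Baire: fragmentable $\Rightarrow$ PCP and generalized Lebesgue property $\Rightarrow$ fragmentable; for $Y$ separable: Borel 1 $\Rightarrow$ Lebesgue property), the following hold: (a) $f$ is weakly separated if and only if $f$ has the LTZ property; (b) if $f$ is weakly separated, then $f$ has the generalized Lebesgue property; (c) if $f$ is fragmentable, then $f$ is Borel 1; (d) if $X$ is hereditarily Baire and $f$ is Borel 1, then $f$ has (PCP); (e) if $X$ is hereditarily Baire and $f$ is weakly separated, then $f$ is fragmentable; (f) if $X$ is separable and $f$ has the generalized Lebesgue property, then $f$ has the Lebesgue property.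
   Context: Let $X$ be a topological space, $(Y,d)$ a metric space and $f\colon X\to Y$. A neighborhood assignment is a family $\{V_x\}_{x\in X}$ of open subsets of $X$ with $x\in V_x$ for every $x$. A family of subsets of $X$ is discrete if every point of $X$ has a neighborhood meeting at most one member of the family; it is $\sigma$-discrete if it is a countable union of discrete families. The function $f$ is called: weakly separated if for every $\varepsilon>0$ there is a neighborhood assignment $\{V_x\}_{x\in X}$ such that for all $x,y\in X$, $(x,y)\in V_y\times V_x$ implies $d(f(x),f(y))<\varepsilon$; fragmentable if for every $\varepsilon>0$ and every nonempty closed $F\subseteq X$ there is an open $U$ with $U\cap F\neq\emptyset$ and $\operatorname{diam} f(U\cap F)<\varepsilon$; cliquish if for every $\varepsilon>0$ and every nonempty open $U\subseteq X$ there is a nonempty open $O\subseteq U$ with $\operatorname{diam} f(O)<\varepsilon$; said to have the Lebesgue property if for every $\varepsilon>0$ there are closed sets $X_n$ ($n\in\mathbb N$) with $X=\bigcup_n X_n$ and $\operatorname{diam} f(X_n)\le\varepsilon$ for all $n$; said to have the generalized Lebesgue property if for every $\varepsilon>0$ there is a $\sigma$-discrete family $\mathcal A_\varepsilon$ of closed subsets of $X$ with $X=\bigcup\mathcal A_\varepsilon$ and $\operatorname{diam} f(A)\le\varepsilon$ for all $A\in\mathcal A_\varepsilon$; said to have (PCP) if for every nonempty closed $F\subseteq X$ the restriction $f|_F$ has a point of continuity; pointwise discontinuous if the set of continuity points of $f$ is dense in $X$; Borel 1 if $f^{-1}(V)$ is an $F_\sigma$ set in $X$ for every open $V\subseteq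 Y$. A space is Baire if every nonempty open subset of it is nonmeager in it; it is hereditarily Baire if every nonempty closed subspace is a Baire space. When $X$ carries a metric $\varrho$, $f$ has the LTZ property if for every $\varepsilon>0$ there is $\delta_\varepsilon\colon X\to(0,\infty)$ such that for all $x,y\in X$, $\varrho(x,y)<\min\{\delta_\varepsilon(x),\delta_\varepsilon(y)\}$ implies $d(f(x),f(y))<\varepsilon$. *)

From HB Require Import structures.
From mathcomp Require Import all_boot all_order all_algebra.
From mathcomp Require Import all_classical all_reals all_analysis.
From mathcomp Require Import borel_hierarchy.
Set Implicit Arguments. Unset Strict Implicit. Unset Printing Implicit Defensive.
Import Order.TTheory GRing.Theory Num.Theory.
Import numFieldNormedType.Exports.
Local Open Scope classical_set_scope.
Local Open Scope ring_scope.

Section Defs.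
Context {R : realType}.

(* diameter of a subset of a metric space, as an extended real
   (sup of distances; -oo for the empty set, +oo if unbounded) *)
Definition diam {Y : metricType R} (A : set Y) : \bar R :=
  ereal_sup [set (mdist a b)%:E | a in A & b in A].

Section Top.
Context {T : topologicalType}.

Definition nbhd_assignment (V : T -> set T) :=
  forall x, open (V x) /\ V x x.

Definition discrete_family (F : set (set T)) :=
  forall x : T, exists U : set T, nbhs x U /\
    forall A B, F A -> F B -> U `&` A !=set0 -> U `&` B !=set0 -> A = B.

Definition sigma_discrete (F : set (set T)) :=
  exists G : (set (set T))^nat, (forall n, discrete_family (G n)) /\
    F = \bigcup_n G n.

(* Relative notions inside a subset F of T (with the subspace topology):
   relatively open sets are the U `&` F with U open in T; the closure of
   A `<=` F relative to F is closure A `&` F. *)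
Definition nowhere_dense_in (F A : set T) :=
  A `<=` F /\
  forall U, open U -> U `&` F `<=` closure A `&` F -> U `&` F = set0.

Definition meager_in (F A : set T) :=
  exists N : (set T)^nat, (forall n, nowhere_dense_in F (N n)) /\
    A `<=` \bigcup_n N n.

Definition baire_in (F : set T) :=
  forall U, open U -> U `&` F !=set0 -> ~ meager_in F (U `&` F).

Definition baire_space := baire_in setT.

Definition hereditarily_baire :=
  forall F : set T, closed F -> F !=set0 -> baire_in F.

Definition separable := exists D : set T, countable D /\ dense D.

End Top.

Section Fun.
Context {X : topologicalType} {Y : metricType R} (f : X -> Y).

Definition weakly_separated :=
  forall e : R, 0 < e -> exists V : X -> set X, nbhd_assignment V /\
    forall x y, V y x -> V x y -> mdist (f x) (f y) < e.

Definition fragmentable :=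
  forall e : R, 0 < e -> forall F : set X, closed F -> F !=set0 ->
    exists U : set X, open U /\ U `&` F !=set0 /\
      (diam (f @` (U `&` F)) < e%:E)%E.

Definition cliquish :=
  forall e : R, 0 < e -> forall U : set X, open U -> U !=set0 ->
    exists O : set X, open O /\ O !=set0 /\ O `<=` U /\
      (diam (f @` O) < e%:E)%E.

Definition lebesgue_property :=
  forall e : R, 0 < e -> exists Xn : (set X)^nat,
    (forall n, closed (Xn n)) /\ \bigcup_n Xn n = setT /\
    forall n, (diam (f @` Xn n) <= e%:E)%E.

Definition generalized_lebesgue_property :=
  forall e : R, 0 < e -> exists A : set (set X),
    sigma_discrete A /\ (forall B, A B -> closed B) /\
    \bigcup_(B in A) B = setT /\
    forall B, A B -> (diam (f @` B) <= e%:E)%E.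

Definition PCP :=
  forall F : set X, closed F -> F !=set0 ->
    exists2 x, F x & f @ within F (nbhs x) --> f x.

Definition pointwise_discontinuous :=
  dense [set x | {for x, continuous f}].

Definition borel1 :=
  forall V : set Y, open V -> Fsigma (f @^-1` V).

End Fun.

Definition LTZ {X Y : metricType R} (f : X -> Y) :=
  forall e : R, 0 < e -> exists delta : X -> R, (forall x, 0 < delta x) /\
    forall x y, mdist x y < Num.min (delta x) (delta y) ->
      mdist (f x) (f y) < e.

End Defs.

From HB Require Import structures.
From mathcomp Require Import all_boot all_order all_algebra.
From mathcomp Require Import all_classical all_reals all_analysis.
From mathcomp Require Import borel_hierarchy wochoice lra.
Import Order.TTheory GRing.Theory Num.Theory.
Set Implicit Arguments. Unset Strict Implicit. Unset Printing Implicit Defensive.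

(* Weak separation is the LTZ property with balls as neighbourhoods.  Given
   an LTZ radius [d] for [e], the sets [closure [r < d]] on which nearby
   points have [3e]-close images exhaust [X]; cutting them along a Stone
   refinement (a sigma-discrete open refinement) of a cover by small balls
   gives the generalized Lebesgue property, which in turn makes preimages of
   open sets [F_sigma], and yields the Lebesgue property when [X] is separable
   since discrete families are then countable.  Fragmentability gives weak
   separation by Zorn's lemma, extending a partial neighbourhood assignment
   over an open piece of its closed complement.  On hereditarily Baire
   spaces, Baire category turns weak separation into fragmentability and
   fragmentability into PCP.  For a Borel 1 map, a Baire argument on the
   closure of two interleaved countable sets whose images lie in disjoint
   subfamilies of a discrete open cover of [Y] shows that some open piece of
   each closed set maps into a single member of the cover; with Stone's
   refinement of [Y] this gives fragmentability, hence PCP. *)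

Local Open Scope classical_set_scope.
Local Open Scope ring_scope.

Notation mball x r := [set y | mdist x y < r].

Section MetricFacts.
Context {R : realType} {T : metricType R}.
Implicit Types (x y z : T) (A B : set T).

Lemma nbhs_mballP x A : nbhs x A <-> exists2 e : R, 0 < e & mball x e `<=` A.
Proof.
by rewrite -metricType_numDomainType.nbhs_nbhs_mdist; split => -[e e0 eA]; exists e.
Qed.

Lemma open_mballP A :
  open A <-> forall x, A x -> exists2 e : R, 0 < e & mball x e `<=` A.
Proof. by rewrite openE; split => AP x /AP /nbhs_mballP. Qed.

Lemma open_mball x (r : R) : open (mball x r).
Proof.
apply/open_mballP => y xy; exists (r - mdist x y); first by rewrite subr_gt0.
move=> z /= yz; rewrite (le_lt_trans (metric_triangle x y z))//.
by rewrite -ltrBrDl.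
Qed.

Lemma mball_nbhs x (r : R) : 0 < r -> nbhs x (mball x r).
Proof. by move=> r0; apply/nbhs_mballP; exists r. Qed.

Lemma closure_mballP A x :
  closure A x <-> forall e : R, 0 < e -> exists y, A y /\ mdist x y < e.
Proof.
split=> [clx e e0|Ax B /nbhs_mballP[e e0 eB]].
  by have [y [Ay xy]] := clx _ (mball_nbhs x e0); exists y.
by have [y [Ay xy]] := Ax e e0; exists y; split => //; apply: eB.
Qed.

Lemma diam_le (S : set T) (c : R) :
  (forall a b, S a -> S b -> mdist a b <= c) -> (diam S <= c%:E)%E.
Proof. by move=> Sc; apply: ge_ereal_sup => _ [a Sa [b Sb <-]]; rewrite lee_fin Sc. Qed.

Lemma diam_ge (S : set T) a b : S a -> S b -> ((mdist a b)%:E <= diam S)%E.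
Proof. by move=> Sa Sb; apply: ereal_sup_ubound; exists a => //; exists b. Qed.

Lemma diam_lt_mdist (S : set T) (e : R) a b :
  (diam S < e%:E)%E -> S a -> S b -> mdist a b < e.
Proof. by move=> Se Sa Sb; rewrite -lte_fin (le_lt_trans (diam_ge Sa Sb)). Qed.

Lemma diam_le_mdist (S : set T) (e : R) a b :
  (diam S <= e%:E)%E -> S a -> S b -> mdist a b <= e.
Proof. by move=> Se Sa Sb; rewrite -lee_fin (le_trans (diam_ge Sa Sb)). Qed.

Lemma diamS A B : A `<=` B -> (diam A <= diam B)%E.
Proof.
move=> AB; apply: ereal_sup_le => _ [a Aa [b Bb <-]].
by exists a; [apply: AB | exists b => //; apply: AB].
Qed.

End MetricFacts.

Lemma exists_natSinv_lt {R : realType} (c : R) :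
  0 < c -> exists n : nat, n.+1%:R^-1 < c.
Proof.
move=> c0; have [N _ NP] := near_infty_natSinv_lt (PosNum c0).
by exists N; apply: NP => /=.
Qed.

Lemma natSinv_le {R : realType} (m n : nat) :
  (m <= n)%N -> n.+1%:R^-1 <= m.+1%:R^-1 :> R.
Proof. by move=> mn; rewrite lef_pV2 ?posrE ?ltr0Sn // ler_nat ltnS. Qed.

Definition unpair (k : nat) : nat * nat := odflt (0, 0)%N (unpickle k).

Lemma unpairK (p : nat * nat) : unpair (pickle p) = p.
Proof. by rewrite /unpair pickleK. Qed.
Section Topology.
Context {T : topologicalType}.
Implicit Types (A B U W F : set T).

Lemma open_meet_closure U A : open U -> U `&` closure A !=set0 -> U `&` A !=set0.
Proof.
move=> oU [x [Ux clx]].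
by have [y [Ay Uy]] := clx U (open_nbhs_nbhs (conj oU Ux)); exists y.
Qed.

Lemma closure_subset_closed A B : closed B -> A `<=` B -> closure A `<=` B.
Proof. by rewrite closureE; exact: smallest_sub. Qed.

Lemma discrete_family_sub (F G : set (set T)) :
  G `<=` F -> discrete_family F -> discrete_family G.
Proof.
move=> GF dF x; have [U [Ux UF]] := dF x.
by exists U; split => // A B /GF FA /GF FB; apply: UF.
Qed.

Lemma closed_bigcup_discrete (F : set (set T)) :
  discrete_family F -> (forall A, F A -> closed A) -> closed (\bigcup_(A in F) A).
Proof.
move=> dF cF; apply/closure_id/seteqP; split; first exact: subset_closure.
move=> x clx; have [U [Ux UF]] := dF x.
have [y [[A FA Ay] Uy]] := clx U Ux.
exists A => //; apply: contrapT => nAx.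
have nAc : nbhs x (~` A).
  by apply: open_nbhs_nbhs; split => //; exact: closed_openC (cF _ FA).
have [z [[B FB Bz] [Uz nAz]]] := clx _ (filterI Ux nAc).
have AB : A = B by apply: UF => //; [exists y | exists z].
by apply: nAz; rewrite AB.
Qed.

Lemma baire_closed_cover F W (C : nat -> set T) :
  baire_in F -> open W -> W `&` F !=set0 -> W `&` F `<=` \bigcup_n C n ->
  (forall n, closed (C n)) ->
  exists n U, [/\ open U, U `<=` W, U `&` F !=set0 & U `&` F `<=` C n].
Proof.
move=> bF oW WF WFC cC; apply: contrapT => noU.
apply: (bF W oW WF); exists (fun n => C n `&` (W `&` F)); split; last first.
  by move=> x WFx; have [n _ Cx] := WFC _ WFx; exists n.
move=> n; split=> [x [_ []] //|U oU UFcl].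
apply: contrapT => /eqP/set0P[x [Ux Fx]].
have [clx _] := UFcl x (conj Ux Fx).
apply: noU; exists n, (U `&` W); split.
- exact: openI.
- by move=> ? [].
- have [y [[_ [Wy Fy]] Uy]] := clx U (open_nbhs_nbhs (conj oU Ux)).
  by exists y.
- move=> y [[Uy Wy] Fy]; have [cly _] := UFcl y (conj Uy Fy).
  exact: (closure_subset_closed (cC n) (@subIsetl _ _ _)) cly.
Qed.

Lemma baire_Fsigma_cover F W (C : nat -> set T) :
  baire_in F -> open W -> W `&` F !=set0 -> W `&` F `<=` \bigcup_n C n ->
  (forall n, Fsigma (C n)) ->
  exists n U, [/\ open U, U `<=` W, U `&` F !=set0 & closure (U `&` F) `<=` C n].
Proof.
move=> bF oW WF WFC CFs.
have /choice[D /all_and2[cD CD]] : forall n, exists D : (set T)^nat,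
    (forall k, closed (D k)) /\ C n = \bigcup_k D k.
  by move=> n; have [D cD CD] := CFs n; exists D.
pose E i := D (unpair i).1 (unpair i).2.
have WFE : W `&` F `<=` \bigcup_i E i.
  move=> x /WFC[n _]; rewrite CD => -[k _ Dx].
  by exists (pickle (n, k)) => //; rewrite /E unpairK.
have [i [U [oU UW UF UFE]]] := baire_closed_cover bF oW WF WFE (fun i => cD _ _).
exists (unpair i).1, U; split => // x /(closure_subset_closed (cD _ _) UFE) Ex.
by rewrite CD; exists (unpair i).2.
Qed.

End Topology.

Section WeaklySeparatedLTZ.
Context {R : realType} {X Y : metricType R} (f : X -> Y).

Lemma weakly_separated_LTZ : weakly_separated f -> LTZ f.
Proof.
move=> ws e e0; have [V [nV VP]] := ws e e0.
have /choice[d dP] : forall x, exists d : R, 0 < d /\ mball x d `<=` V x.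
  move=> x; have [oV Vx] := nV x.
  by have [d d0 dV] := (open_mballP (V x)).1 oV x Vx; exists d.
exists d; split=> [x|x y]; first by case: (dP x).
rewrite lt_min => /andP[xy yx]; apply: VP.
- by apply: (dP y).2; rewrite /= metric_sym.
- exact: (dP x).2.
Qed.

Lemma LTZ_weakly_separated : LTZ f -> weakly_separated f.
Proof.
move=> ltz e e0; have [d [d0 dP]] := ltz e e0.
exists (fun x => mball x (d x)); split=> [x|x y /= yx xy].
  by split; [exact: open_mball | rewrite /= mdistxx].
by apply: dP; rewrite lt_min xy metric_sym yx.
Qed.

End WeaklySeparatedLTZ.

Section StoneRefinement.
Context {R : realType} {T : metricType R}.

(* Well-order [T], send
   [x] to the least centre [s] of an [r]-ball containing it, and let [V n s]
   be the [1/(n+1)]-neighbourhood of those [x] sent to [s] whose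
   [3/(n+1)]-ball still lies in the [r]-ball around [s]. *)
Lemma stone_refinement (r : R) : 0 < r -> exists V : nat -> T -> set T,
  [/\ forall n s, open (V n s),
      forall n s, V n s `<=` mball s r,
      forall n s t u v, s <> t -> V n s u -> V n t v -> n.+1%:R^-1 < mdist u v &
      forall x, exists n s, V n s x].
Proof.
move=> r0; have [rel wo] := well_ordering_principle T.
have anti : {in predT &, antisymmetric rel}.
  by apply: wo_chain_antisymmetric => A _; exact: wo.
have /choice[c cP] : forall x : T,
    exists s : T, mdist s x < r /\ forall t, mdist t x < r -> rel s t.
  move=> x; have [|s [[sx sP] _]] := wo [pred s | `[< mdist s x < r >]].
    by exists x; rewrite inE /= mdistxx.
  by exists s; split=> [|t tx]; [move: sx; rewrite inE | apply: sP; rewrite inE].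
pose rho n : R := n.+1%:R^-1.
have rho0 n : 0 < rho n by rewrite invr_gt0.
pose core n s x := c x = s /\ forall z, mdist x z < 3 * rho n -> mdist s z < r.
exists (fun n s => [set u | exists2 x, core n s x & mdist x u < rho n]); split.
- move=> n s; apply/open_mballP => u [x cx xu].
  exists (rho n - mdist x u); first by rewrite subr_gt0.
  move=> v /= uv; exists x => //.
  by rewrite (le_lt_trans (metric_triangle x u v))// -ltrBrDl.
- move=> n s u [x [_ xP] xu]; apply: xP.
  by rewrite (lt_le_trans xu)//; have := rho0 n; lra.
- move=> n s t u v st [x [cx xP] xu] [y [cy yP] yv].
  have rho3 : 3 * rho n <= mdist x y.
    rewrite leNgt; apply/negP => xy; apply: st; apply: anti => //.
    rewrite -cx -cy; apply/andP; split.
    - by apply: (cP x).2; rewrite cy; apply: yP; rewrite metric_sym.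
    - by apply: (cP y).2; rewrite cx; exact: xP.
  have := metric_triangle x u y; have := metric_triangle u v y.
  by have := metric_sym y v; rewrite -/(rho n); lra.
- move=> x; have [cx _] := cP x.
  have [|n nP] := @exists_natSinv_lt R ((r - mdist (c x) x) / 3).
    by rewrite divr_gt0// subr_gt0.
  exists n, (c x), x; last by rewrite mdistxx.
  split=> // z xz; rewrite (le_lt_trans (metric_triangle _ x z))// -ltrBrDl.
  by rewrite (lt_le_trans xz)// -ler_pdivlMl// mulrC ltW.
Qed.

Lemma discrete_family_separated (I : Type) (W A : I -> set T) (delta : R) :
  0 < delta -> (forall s t u v, s <> t -> W s u -> W t v -> delta < mdist u v) ->
  (forall s, A s `<=` closure (W s)) -> discrete_family [set A s | s in setT].
Proof.
move=> delta0 sepW AW x; exists (mball x (delta / 2)).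
split=> [|_ _ [s _ <-] [t _ <-] [y [xy As]] [z [xz At]]].
  by apply: mball_nbhs; rewrite divr_gt0.
have [<-|st] := pselect (s = t) => //; exfalso.
have [u [xu Wu]] := open_meet_closure (open_mball x (delta / 2))
  (ex_intro _ y (conj xy (AW s y As))).
have [v [xv Wv]] := open_meet_closure (open_mball x (delta / 2))
  (ex_intro _ z (conj xz (AW t z At))).
have := sepW _ _ _ _ st Wu Wv; have := metric_triangle u x v.
by move: xu xv => /=; rewrite (metric_sym u x); lra.
Qed.

End StoneRefinement.

Section LTZEstimate.
Context {R : realType} {X Y : metricType R} (f : X -> Y) (e : R) (d : X -> R).
Hypotheses (d_gt0 : forall x, 0 < d x)
  (dP : forall x y, mdist x y < Num.min (d x) (d y) -> mdist (f x) (f y) < e).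

(* Approximate [z] and [z'] by points [x], [x'] with [r < d x], [r < d x']:
   then [z ~ x ~ x' ~ z'] is a chain of three [e]-close pairs. *)
Lemma LTZ_level_closure (r : R) z z' : 0 < r ->
  closure [set x | r < d x] z -> closure [set x | r < d x] z' ->
  mdist z z' < r / 2 -> mdist (f z) (f z') < 3 * e.
Proof.
move=> r0 cz cz' zz'.
have r4r : r / 4 < r by lra.
have near_level w : closure [set x | r < d x] w ->
    exists x, [/\ r < d x, mdist w x < r / 4 & mdist (f w) (f x) < e].
  move=> cw; have [|x [rx wx]] := (closure_mballP _ _).1 cw (Num.min (r / 4) (d w)).
    by rewrite lt_min d_gt0 divr_gt0.
  move: wx; rewrite lt_min => /andP[wx wdx]; exists x; split=> //.
  by apply: dP; rewrite lt_min wdx (lt_trans wx)// (lt_trans r4r).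
have [x [rx zx fzx]] := near_level _ cz.
have [x' [rx' zx' fzx']] := near_level _ cz'.
have fxx' : mdist (f x) (f x') < e.
  apply: dP; rewrite lt_min; have := metric_triangle x z x'.
  have := metric_triangle z z' x'; rewrite (metric_sym x z).
  by move=> h1 h2; apply/andP; split; lra.
have := metric_triangle (f z) (f x) (f z'); have := metric_triangle (f x) (f x') (f z').
by rewrite (metric_sym (f x') (f z')); lra.
Qed.

End LTZEstimate.

Section GeneralizedLebesgue.
Context {R : realType} {X Y : metricType R} (f : X -> Y).

(* The family consists of the sets [closure (V n m s) `&` level n], where
   [V n] is a Stone refinement of the cover by [1/(8(n+1))]-balls and
   [level n] is where the LTZ radius exceeds [1/(n+1)]. *)
Lemma weakly_separated_gen_lebesgue :
  weakly_separated f -> generalized_lebesgue_property f.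
Proof.
move=> /weakly_separated_LTZ ltz e e0.
have [d [d_gt0 dP]] := ltz (e / 3) (divr_gt0 e0 (ltr0Sn _ 2)).
pose level n := closure [set x | n.+1%:R^-1 < d x].
have /choice[V VP] n : exists V : nat -> X -> set X,
  [/\ forall m s, open (V m s),
      forall m s, V m s `<=` mball s (n.+1%:R^-1 / 8),
      forall m s t u v, s <> t -> V m s u -> V m t v -> m.+1%:R^-1 < mdist u v &
      forall x, exists m s, V m s x].
  by apply: stone_refinement; rewrite divr_gt0 ?invr_gt0.
pose piece n m s := closure (V n m s) `&` level n.
pose G k := [set piece (unpair k).1 (unpair k).2 s | s in setT].
exists (\bigcup_k G k); split; [|split; [|split]].
- exists G; split => // k; have [_ _ sepV _] := VP (unpair k).1.
  have delta0 : 0 < (unpair k).2.+1%:R^-1 :> R by rewrite invr_gt0.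
  by apply: (discrete_family_separated delta0 (sepV _)) => s x [].
- by move=> _ [k _ [s _ <-]]; apply: closedI; exact: closed_closure.
- apply/seteqP; split => // x _; have [n nx] := exists_natSinv_lt (d_gt0 x).
  have [_ _ _ /(_ x)[m [s Vx]]] := VP n.
  exists (piece n m s); last by split; apply: subset_closure.
  by exists (pickle (n, m)) => //; exists s => //; rewrite unpairK.
- move=> _ [k _ [s _ <-]]; rewrite /piece; move: (unpair k) => [n m] /=.
  have [_ Vs _ _] := VP n; set r : R := n.+1%:R^-1.
  have r0 : 0 < r by rewrite invr_gt0.
  apply: diam_le => _ _ [z [cz lz] <-] [z' [cz' lz'] <-].
  suff /(LTZ_level_closure d_gt0 dP r0 lz lz') : mdist z z' < r / 2 by lra.
  have [|w [Vw zw]] := (closure_mballP _ _).1 cz (r / 8); first by rewrite divr_gt0.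
  have [|w' [Vw' zw']] := (closure_mballP _ _).1 cz' (r / 8); first by rewrite divr_gt0.
  have := Vs _ _ _ Vw; have := Vs _ _ _ Vw'; rewrite /= -/r => sw' sw.
  have := metric_triangle z w z'; have := metric_triangle w s z'.
  have := metric_triangle s w' z'; rewrite (metric_sym w s) (metric_sym w' z').
  lra.
Qed.

End GeneralizedLebesgue.

Section GeneralizedLebesgueBorel.
Context {R : realType} {X : topologicalType} {Y : metricType R} (f : X -> Y).

(* [f^-1 V] is the union over [k] and [n] of the members [B] of the [n]-th
   discrete subfamily at scale [1/(k+1)] with [f @` B `<=` V]; each such
   union is closed. *)
Lemma gen_lebesgue_borel1 : generalized_lebesgue_property f -> borel1 f.
Proof.
move=> glp V oV.
have /choice[A AP] k : exists A : set (set X),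
    sigma_discrete A /\ (forall B, A B -> closed B) /\
    \bigcup_(B in A) B = setT /\
    forall B, A B -> (diam (f @` B) <= (k.+1%:R^-1)%:E)%E.
  by apply: glp; rewrite invr_gt0.
have /choice[G GP] k : exists G : (set (set X))^nat,
    (forall n, discrete_family (G n)) /\ A k = \bigcup_n G n.
  by case: (AP k) => -[G GP] _; exists G.
pose C p := \bigcup_(B in [set B | G p.1 p.2 B /\ f @` B `<=` V]) B.
exists (fun i => C (unpair i)).
  move=> i; case: (unpair i) => k n; case: (GP k) => dG AG.
  apply: closed_bigcup_discrete => [|B [GB _]].
    by apply: (discrete_family_sub _ (dG n)) => B [].
  by case: (AP k) => _ [cA _]; apply: cA; rewrite AG; exists n.
apply/seteqP; split; last by move=> x [i _ [B [_ BV] Bx]]; apply: BV; exists x.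
move=> x /= Vx.
have [r r0 rV] := (open_mballP V).1 oV _ Vx.
have [k kr] := exists_natSinv_lt r0.
case: (AP k) => _ [_ [covA dA]].
have [B AB Bx] : (\bigcup_(B in A k) B) x by rewrite covA.
move: (AB); case: (GP k) => _ -> [n _ GB].
exists (pickle (k, n)) => //; rewrite unpairK.
exists B => //; split=> // _ [b Bb <-]; apply: rV => /=.
apply: le_lt_trans kr; apply: (diam_le_mdist (dA _ AB)); by [exists x | exists b].
Qed.

End GeneralizedLebesgueBorel.

Section FragmentableWeaklySeparated.
Context {R : realType} {X : topologicalType} {Y : metricType R} (f : X -> Y).
Variable e : R.

Definition assigned (S : set (X * set X)) := [set x | exists U, S (x, U)].

(* A neighbourhood assignment defined on the open set [assigned S] only;
   several neighbourhoods may be assigned to the same point. *)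
Definition partial_separation (S : set (X * set X)) :=
  (forall p, S p -> [/\ open p.2, p.2 p.1 & p.2 `<=` assigned S]) /\
  (forall p q, S p -> S q -> p.2 q.1 -> q.2 p.1 -> mdist (f p.1) (f q.1) < e).

Lemma partial_separation_bigcup (F : set (set (X * set X))) :
  F `<=` partial_separation -> total_on F subset ->
  partial_separation (\bigcup_(S in F) S).
Proof.
move=> Fsep Ftot; split=> [p [S FS Sp]|p q [S FS Sp] [S' FS' Sq]].
  have [op pp pS] := (Fsep _ FS).1 _ Sp; split => // y /pS[U SU].
  by exists U, S.
have [SS'|S'S] := Ftot _ _ FS FS'.
- by apply: (Fsep _ FS').2 => //; apply: SS'.
- by apply: (Fsep _ FS).2 => //; apply: S'S.
Qed.

Lemma open_assigned S : partial_separation S -> open (assigned S).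
Proof.
move=> [Sopen _]; rewrite openE => x [U SU]; have [oU Ux US] := Sopen _ SU.
by apply: filterS US _; apply: open_nbhs_nbhs.
Qed.

(* Fragmentability on the closed complement of [assigned S] provides an open
   [U] on which [f] oscillates less than [e]; assign [U] to its new points. *)
Lemma partial_separation_extend S : fragmentable f -> 0 < e ->
  partial_separation S -> ~` assigned S !=set0 ->
  exists2 S', S `<` S' & partial_separation S'.
Proof.
move=> fr e0 Ssep [x0 nx0].
have [U [oU [[x1 [Ux1 nx1]] dU]]] :=
  fr e e0 _ (open_closedC (open_assigned Ssep)) (ex_intro _ x0 nx0).
pose S' := S `|` [set p | p.2 = U /\ U p.1 /\ ~ assigned S p.1].
have SS' : assigned S `<=` assigned S' by move=> y [V SV]; exists V; left.
exists S'.
  split=> [p Sp|/(_ (x1, U)) S'S]; first by left.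
  have : assigned S x1 by exists U; apply: S'S; right.
  exact: nx1.
have [Sopen Sdist] := Ssep; split.
- move=> p [Sp|[-> [Up np]]].
    by have [op pp pS] := Sopen _ Sp; split => //; apply: subset_trans pS SS'.
  split=> // y Uy; have [Sy|nSy] := pselect (assigned S y); first exact: SS'.
  by exists U; right.
- move=> p q [Sp|[-> [Up np]]] [Sq|[-> [Uq nq]]] pq qp.
  + exact: Sdist.
  + by have [_ _ pS] := Sopen _ Sp; case: nq; apply: pS.
  + by have [_ _ qS] := Sopen _ Sq; case: np; apply: qS.
  + by apply: (diam_lt_mdist dU); [exists p.1 | exists q.1].
Qed.

End FragmentableWeaklySeparated.

Lemma fragmentable_weakly_separated {R : realType} {X : topologicalType}
    {Y : metricType R} (f : X -> Y) :
  fragmentable f -> weakly_separated f.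
Proof.
move=> fr e e0.
have [S [Ssep Smax]] := Zorn_bigcup (@partial_separation_bigcup R X Y f e).
have SX x : assigned S x.
  apply: contrapT => nx.
  have [S' SS' S'sep] := partial_separation_extend fr e0 Ssep (ex_intro _ x nx).
  exact: Smax _ SS' S'sep.
have [Sopen Sdist] := Ssep.
have /choice[V SV] x : exists U, S (x, U) by have [U SU] := SX x; exists U.
exists V; split=> [x|x y Vyx Vxy]; first by have [oV Vx _] := Sopen _ (SV x).
exact: Sdist _ _ (SV x) (SV y) Vxy Vyx.
Qed.
Section HereditarilyBaire.
Context {R : realType}.

(* By Baire, some level set [r < d x] of the LTZ radius is dense in an open
   piece of [F]; a ball of radius [r/4] in that piece has small image. *)
Lemma weakly_separated_fragmentable {X Y : metricType R} (f : X -> Y) :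
  @hereditarily_baire X -> weakly_separated f -> fragmentable f.
Proof.
move=> hb /weakly_separated_LTZ ltz e e0 F cF F0.
have [d [d_gt0 dP]] := ltz (e / 4) (divr_gt0 e0 (ltr0Sn _ 3)).
pose level n := closure [set x | n.+1%:R^-1 < d x].
have [|||n [U [oU _ [x0 [Ux0 Fx0]] UFlevel]]] :=
    @baire_Fsigma_cover _ F setT level (hb F cF F0) openT.
- by have [x Fx] := F0; exists x.
- move=> x [_ Fx]; have [n nx] := exists_natSinv_lt (d_gt0 x).
  by exists n => //; apply: subset_closure.
- by move=> n; apply/closed_Fsigma/closed_closure.
set r : R := n.+1%:R^-1; have r0 : 0 < r by rewrite invr_gt0.
exists (U `&` mball x0 (r / 4)); split; first exact/openI/open_mball.
split; first by exists x0; split => //; split => //=; rewrite mdistxx divr_gt0.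
apply: (@le_lt_trans _ _ (3 * (e / 4))%:E); last by rewrite lte_fin; lra.
apply: diam_le => _ _ [z [[Uz x0z] Fz] <-] [z' [[Uz' x0z'] Fz'] <-].
have levelz w : U w -> F w -> level n w.
  by move=> Uw Fw; apply: UFlevel; apply: subset_closure.
apply/ltW/(LTZ_level_closure d_gt0 dP r0 (levelz _ Uz Fz) (levelz _ Uz' Fz')).
have := metric_triangle z x0 z'; rewrite (metric_sym z x0) /=.
by move: x0z x0z' => /= x0z x0z'; lra.
Qed.

(* At a point lying in every open set on which [f|F] oscillates less than
   [1/(k+1)], [f|F] is continuous; Baire provides such a point because
   fragmentability makes these open sets dense in [F]. *)
Lemma fragmentable_PCP {X : topologicalType} {Y : metricType R} (f : X -> Y) :
  @hereditarily_baire X -> fragmentable f -> PCP f.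
Proof.
move=> hb fr F cF F0.
pose O k := \bigcup_(U in [set U | open U /\
  (diam (f @` (U `&` F)) < (k.+1%:R^-1)%:E)%E]) U.
have [x [Fx Ox]] : exists x, F x /\ forall k, O k x.
  apply: contrapT => noX.
  have [|||k [U [oU _ UF UFO]]] :=
      @baire_Fsigma_cover _ F setT (fun k => F `\` O k) (hb F cF F0) openT.
  - by have [x Fx] := F0; exists x.
  - move=> x [_ Fx]; apply: contrapT => nx; apply: noX; exists x; split => // k.
    by apply: contrapT => nk; apply: nx; exists k.
  - move=> k; apply: closed_Fsigma; rewrite setDE; apply: closedI => //.
    by apply: open_closedC; apply: bigcup_open => U [].
  have k0 : 0 < k.+1%:R^-1 :> R by rewrite invr_gt0.
  have [|V [oV [VU dV]]] := fr _ k0 _ (@closed_closure _ (U `&` F)).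
    by have [y UFy] := UF; exists y; apply: subset_closure.
  have [y [Vy [Uy Fy]]] := open_meet_closure oV VU.
  have [_ ] := UFO y (subset_closure (conj Uy Fy)); apply.
  exists (V `&` U); first split; [exact: openI | | by split].
  apply: le_lt_trans dV; apply/diamS/image_subset.
  by move=> z [[Vz Uz] Fz]; split => //; apply: subset_closure.
exists x => //; apply/metricType_numDomainType.cvgrPdist_lt => eps eps0.
have [k keps] := exists_natSinv_lt eps0.
have [U [oU dU] Ux] := Ox k.
rewrite near_withinE; apply: (@filterS _ _ _ U); last exact: open_nbhs_nbhs.
move=> z Uz Fz; apply: lt_trans keps.
by apply: (diam_lt_mdist dU); [exists x | exists z].
Qed.

End HereditarilyBaire.

Section Separable.
Context {R : realType} {X : metricType R}.

(* Each nonempty member [B] is the only member meeting some ball around a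
   point of the dense set with radius [1/(k+1)]; the pair of the index of
   that point and [k] enumerates [B]. *)
Lemma separable_discrete_enum (F : set (set X)) :
  @separable X -> discrete_family F ->
  exists A : nat -> set X, (forall i, A i = set0 \/ F (A i)) /\
    forall B, F B -> B !=set0 -> exists i, A i = B.
Proof.
move=> [D [cD dD]] dF; have /countable_injP[g ginj] := cD.
pose isolates j k B := exists d, [/\ D d, g d = j,
  mball d k.+1%:R^-1 `&` B !=set0 &
  forall B', F B' -> mball d k.+1%:R^-1 `&` B' !=set0 -> B' = B].
pose A i := \bigcup_(B in [set B | F B /\ isolates (unpair i).1 (unpair i).2 B]) B.
have AE i B : F B -> isolates (unpair i).1 (unpair i).2 B -> A i = B.
  move=> FB iB; have [d [Dd gd _ dB]] := iB.
  apply/seteqP; split=> [x [B' [FB' [d' [Dd' gd' dB' _]]]]|x Bx].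
    have dd' : d = d' by apply: ginj; rewrite ?inE // gd gd'.
    by rewrite (dB B') // dd'.
  by exists B.
exists A; split=> [i|B FB [x Bx]].
  have [[B [FB iB]]|noB] :=
    pselect (exists B, F B /\ isolates (unpair i).1 (unpair i).2 B).
    by right; rewrite (AE i B).
  by left; apply/seteqP; split=> // x [B [FB iB] _]; apply: noB; exists B.
have [U [Ux UF]] := dF x; have [r r0 rU] := (nbhs_mballP _ _).1 Ux.
have [k kr] := exists_natSinv_lt (divr_gt0 r0 (ltr0Sn _ 1)).
have k0 : 0 < k.+1%:R^-1 :> R by rewrite invr_gt0.
have [d [xd Dd]] : mball x k.+1%:R^-1 `&` D !=set0.
  by apply: dD; [exists x; rewrite /= mdistxx | exact: open_mball].
exists (pickle (g d, k)); apply: AE => //; rewrite unpairK.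
exists d; split=> //; first by exists x; split => //; rewrite /= metric_sym.
move=> B' FB' [y [dy B'y]]; apply: UF => //.
- exists y; split => //; apply: rU => /=.
  have := metric_triangle x d y; move: xd dy kr => /=.
  by move: (k.+1%:R^-1) => rk; lra.
- by exists x; split => //; apply: rU; rewrite /= mdistxx.
Qed.

Lemma gen_lebesgue_lebesgue {Y : metricType R} (f : X -> Y) :
  @separable X -> generalized_lebesgue_property f -> lebesgue_property f.
Proof.
move=> sepX glp e e0; have [A [[G [dG AG]] [cA [covA dA]]]] := glp e e0.
have GA m B : G m B -> A B by move=> GB; rewrite AG; exists m.
have /choice[E EP] m : exists E : nat -> set X,
    (forall i, E i = set0 \/ G m (E i)) /\
    forall B, G m B -> B !=set0 -> exists i, E i = B.
  exact: separable_discrete_enum (dG m).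
exists (fun k => E (unpair k).1 (unpair k).2); split; [|split].
- move=> k; have [-> | GE] := (EP (unpair k).1).1 (unpair k).2; first exact: closed0.
  exact: cA (GA _ _ GE).
- apply/seteqP; split => // x _.
  have [B AB Bx] : (\bigcup_(B in A) B) x by rewrite covA.
  move: AB; rewrite AG => -[m _ GB].
  have [i EB] := (EP m).2 B GB (ex_intro _ x Bx).
  by exists (pickle (m, i)) => //; rewrite unpairK EB.
- move=> k; have [-> | GE] := (EP (unpair k).1).1 (unpair k).2.
    by apply: diam_le => _ _ [? []].
  exact: dA (GA _ _ GE).
Qed.

End Separable.

Section Interleave.
Variables (T I : eqType) (idx : T -> I) (pick : T * nat * seq I -> T) (t0 : T).
Variables (P : T -> Prop) (Q : T -> T -> nat -> Prop).
Hypothesis pickP : forall c n L, P c ->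
  [/\ P (pick (c, n, L)), idx (pick (c, n, L)) \notin L & Q c (pick (c, n, L)) n].

Definition tag_idx (p : T * bool) := idx p.1.

Definition push_pair n (acc : seq (T * bool)) (p : T * bool) :=
  let acc1 := rcons acc (pick (p.1, n, map tag_idx acc), true) in
  rcons acc1 (pick (p.1, n, map tag_idx acc1), false).

Fixpoint stage n : seq (T * bool) :=
  if n is m.+1 then foldl (push_pair m) (stage m) (stage m) else [:: (t0, true)].

Lemma push_pairs_prefix n L acc : exists L', foldl (push_pair n) acc L = acc ++ L'.
Proof.
elim: L acc => [|p L IHL] acc /=; first by exists [::]; rewrite cats0.
have [L' ->] := IHL (push_pair n acc p).
by eexists; rewrite /push_pair -!cats1 -!catA.
Qed.

Lemma stage_prefix n m : (n <= m)%N -> exists L, stage m = stage n ++ L.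
Proof.
elim: m => [|m IHm]; first by rewrite leqn0 => /eqP ->; exists [::]; rewrite cats0.
rewrite leq_eqVlt => /orP[/eqP ->|]; first by exists [::]; rewrite cats0.
rewrite ltnS => /IHm[L stageE] /=.
have [L' ->] := push_pairs_prefix m (stage m) (stage m).
by exists (L ++ L'); rewrite stageE catA.
Qed.

Lemma push_pairs_inv n L acc : (forall p, p \in L -> P p.1) ->
  (forall p, p \in acc -> P p.1) -> uniq (map tag_idx acc) ->
  (forall p, p \in foldl (push_pair n) acc L -> P p.1) /\
  uniq (map tag_idx (foldl (push_pair n) acc L)).
Proof.
elim: L acc => [|q L IHL] acc //= PL Pacc uacc.
have Pq : P q.1 by apply: PL; rewrite inE eqxx.
pose acc1 := rcons acc (pick (q.1, n, map tag_idx acc), true).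
have [P1 fresh1 _] := pickP n (map tag_idx acc) Pq.
have [P2 fresh2 _] := pickP n (map tag_idx acc1) Pq.
apply: IHL => [p pL|p|]; first by apply: PL; rewrite inE pL orbT.
  by rewrite /push_pair /= !(mem_rcons, inE) => /orP[/eqP ->|/orP[/eqP ->|/Pacc]].
rewrite /push_pair !map_rcons !rcons_uniq uacc andbT.
by move: fresh1 fresh2; rewrite /acc1 map_rcons /= => -> ->.
Qed.

Lemma stage_inv : P t0 -> forall n,
  (forall p, p \in stage n -> P p.1) /\ uniq (map tag_idx (stage n)).
Proof.
move=> Pt0; elim=> [|n [IH1 IH2]] /=; last exact: push_pairs_inv.
by split => // p; rewrite inE => /eqP ->.
Qed.

Lemma push_pairs_near n L acc p : p \in L -> P p.1 ->
  exists a b, [/\ (a, true) \in foldl (push_pair n) acc L,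
    (b, false) \in foldl (push_pair n) acc L, Q p.1 a n & Q p.1 b n].
Proof.
elim: L acc => [|q L IHL] acc //=; rewrite inE => /orP[/eqP ->|pL] Pp; last exact: IHL.
have [L' ->] := push_pairs_prefix n L (push_pair n acc q).
pose acc1 := rcons acc (pick (q.1, n, map tag_idx acc), true).
exists (pick (q.1, n, map tag_idx acc)), (pick (q.1, n, map tag_idx acc1)).
have [_ _ Q1] := pickP n (map tag_idx acc) Pp.
have [_ _ Q2] := pickP n (map tag_idx acc1) Pp.
by split => //; rewrite mem_cat /push_pair !(mem_rcons, in_cons) eqxx ?orbT.
Qed.

Lemma stage_idx_separated : P t0 -> forall n m x y,
  (x, true) \in stage n -> (y, false) \in stage m -> idx x != idx y.
Proof.
move=> Pt0 n m x y xn ym; have [_ uN] := stage_inv Pt0 (maxn n m).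
have [L1 E1] := stage_prefix (leq_maxl n m).
have [L2 E2] := stage_prefix (leq_maxr n m).
have : (x, true) \in stage (maxn n m) by rewrite E1 mem_cat xn.
have : (y, false) \in stage (maxn n m) by rewrite E2 mem_cat ym.
elim: (stage _) uN => //= p L IHL /andP[pL uL]; rewrite !inE.
move=> /orP[/eqP yp|yL] /orP[/eqP xp|xL]; first by rewrite -yp in xp.
- by apply: contraNneq pL; rewrite -yp /tag_idx /= => <-; apply: map_f xL.
- by apply: contraNneq pL; rewrite -xp /tag_idx /= => ->; apply: map_f yL.
- exact: IHL.
Qed.

Definition stage_points b := [set x | exists n, (x, b) \in stage n].

Lemma stage_points_sub : P t0 -> stage_points true `|` stage_points false `<=` P.
Proof. by move=> Pt0 x [] [n xn]; exact: (stage_inv Pt0 n).1 _ xn. Qed.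

Lemma stage_points_idx_separated : P t0 ->
  forall x y, stage_points true x -> stage_points false y -> idx x <> idx y.
Proof. by move=> Pt0 x y [n xn] [m ym]; apply/eqP/(stage_idx_separated Pt0 xn ym). Qed.

Lemma stage_points_near : P t0 ->
  forall y N, (stage_points true `|` stage_points false) y ->
  exists m, [/\ (N <= m)%N, exists2 a, stage_points true a & Q y a m
                          & exists2 b, stage_points false b & Q y b m].
Proof.
move=> Pt0 y N yS; have [n [c yn]] : exists n c, (y, c) \in stage n.
  by case: yS => -[n yn]; exists n; eexists; exact: yn.
have [L E] := stage_prefix (leq_maxl n N).
have yM : (y, c) \in stage (maxn n N) by rewrite E mem_cat yn.
have [a [b [aM bM ya yb]]] :=
  push_pairs_near (maxn n N) (stage (maxn n N)) yM ((stage_inv Pt0 _).1 _ yM).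
by exists (maxn n N); split; [exact: leq_maxr | exists a | exists b];
  do ?exists (maxn n N).+1.
Qed.

End Interleave.

Section BorelOne.
Context {R : realType} {X Y : metricType R} (f : X -> Y) {I : eqType}.
Variable V : I -> set Y.
Hypotheses (hb : @hereditarily_baire X) (b1 : borel1 f)
  (oV : forall s, open (V s)) (dV : forall s t y, V s y -> V t y -> s = t).

Lemma borel1_bigcup_Fsigma (J : set I) : Fsigma (f @^-1` \bigcup_(s in J) V s).
Proof. by apply: b1; apply: bigcup_open => s _; exact: oV. Qed.

(* Split the indices by whether they occur on [S1]: the preimages [T1] and
   [T2] of the two unions are disjoint [F_sigma] sets covering the closure
   [K] of [S1 `|` S2], so by Baire one of them contains an open piece of
   [K]; but both [S1] and [S2] meet every open piece of [K]. *)
Lemma borel1_interleaved_absurd (idx : X -> I) (S1 S2 : set X) :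
  S1 `|` S2 !=set0 -> (forall x, closure (S1 `|` S2) x -> V (idx x) (f x)) ->
  (forall x y, S1 x -> S2 y -> idx x <> idx y) ->
  S1 `|` S2 `<=` closure S1 `&` closure S2 -> False.
Proof.
move=> [x0 Sx0] idxP sep12 dense12; pose K := closure (S1 `|` S2).
have KS x : (S1 `|` S2) x -> K x by apply: subset_closure.
have K12 : K `<=` closure S1 `&` closure S2.
  by apply: closure_subset_closed dense12; apply: closedI; exact: closed_closure.
pose T1 := f @^-1` \bigcup_(s in idx @` S1) V s.
pose T2 := f @^-1` \bigcup_(s in ~` (idx @` S1)) V s.
have T12 z : T1 z -> T2 z -> False.
  by move=> [s S1s Vs] [t nS1t Vt]; apply: nS1t; rewrite -(dV Vs Vt).
pose C n := if n is 0 then T1 else T2.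
have [|||n [U [oU _ [z [Uz Kz]] UKC]]] :=
    @baire_Fsigma_cover _ K setT C
      (hb (@closed_closure _ _) (ex_intro _ x0 (KS _ Sx0))) openT.
- by exists x0; split => //; exact: KS Sx0.
- move=> z [_ Kz]; have [S1z|nS1z] := pselect ((idx @` S1) (idx z)).
    by exists 0%N => //; exists (idx z) => //; exact: idxP.
  by exists 1%N => //; exists (idx z) => //; exact: idxP.
- by case=> [|n]; exact: borel1_bigcup_Fsigma.
have [x [Ux S1x]] := open_meet_closure oU (ex_intro _ z (conj Uz (K12 _ Kz).1)).
have [y [Uy S2y]] := open_meet_closure oU (ex_intro _ z (conj Uz (K12 _ Kz).2)).
have /UKC Cx : closure (U `&` K) x.
  by apply: subset_closure; split => //; apply: KS; left.
have /UKC Cy : closure (U `&` K) y.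
  by apply: subset_closure; split => //; apply: KS; right.
case: n {UKC} Cx Cy => [_ T1y|n T2x _].
- apply: T12 T1y _; exists (idx y); last by apply: idxP; apply: KS; right.
  by move=> /= -[x' S1x']; exact: sep12.
- by apply: T12 _ T2x; exists (idx x); [exists x | apply: idxP; apply: KS; left].
Qed.

Lemma borel1_fresh_index (H : set X) (idx : X -> I) : closed H ->
  (forall x, H x -> V (idx x) (f x)) ->
  ~ (exists s U, [/\ open U, U `&` H !=set0 & U `&` H `<=` f @^-1` V s]) ->
  forall c (r : R) (L : seq I), 0 < r -> H c ->
    exists x, [/\ H x, mdist c x < r & idx x \notin L].
Proof.
move=> cH idxP noPiece c r L r0 Hc; apply: contrapT => noX.
have [|||n [U [oU _ UH UHL]]] := @baire_Fsigma_cover _ H (mball c r)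
    (fun n => f @^-1` V (nth (idx c) L n)) (hb cH (ex_intro _ c Hc)) (open_mball c r).
- by exists c; split => //=; rewrite mdistxx.
- move=> x [cx Hx]; have xL : idx x \in L.
    by apply: contrapT => /negP xL; apply: noX; exists x.
  by exists (index (idx x) L) => //; rewrite /= nth_index //; exact: idxP.
- by move=> n; exact: b1 (oV _).
by apply: noPiece; exists (nth (idx c) L n), U; split => // x /subset_closure /UHL.
Qed.

(* If no open piece of [H] maps into a single [V s], fresh indices can
   always be found near any point; interleaving them yields [S1] and [S2]
   contradicting [borel1_interleaved_absurd]. *)
Lemma borel1_open_piece (H : set X) : closed H -> H !=set0 ->
  H `<=` f @^-1` (\bigcup_(s in setT) V s) ->
  exists s U, [/\ open U, U `&` H !=set0 & U `&` H `<=` f @^-1` V s].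
Proof.
move=> cH [x0 Hx0] HV; apply: contrapT => noPiece.
have [s0 _ _] := HV x0 Hx0.
have /choice[idx idxP] x : exists s, H x -> V s (f x).
  have [Hx|] := pselect (H x); last by exists s0.
  by have [s _ Vs] := HV x Hx; exists s.
have /choice[pick pickP] (p : X * nat * seq I) : exists x, H p.1.1 ->
    [/\ H x, idx x \notin p.2 & mdist p.1.1 x < p.1.2.+1%:R^-1].
  case: p => [[c n] L]; have [Hc|] := pselect (H c); last by exists x0.
  have n0 : 0 < n.+1%:R^-1 :> R by rewrite invr_gt0.
  by have [x [Hx cx xL]] := borel1_fresh_index cH idxP noPiece L n0 Hc; exists x.
pose Q (c a : X) n : Prop := mdist c a < n.+1%:R^-1 :> R.
have pickQ c n L : H c -> [/\ H (pick (c, n, L)), idx (pick (c, n, L)) \notin L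
    & Q c (pick (c, n, L)) n] by exact: pickP (c, n, L).
apply: (@borel1_interleaved_absurd idx
  (stage_points idx pick x0 true) (stage_points idx pick x0 false)).
- by exists x0; left; exists 0%N; rewrite mem_head.
- by move=> x /(closure_subset_closed cH (stage_points_sub pickQ Hx0)) /idxP.
- exact: stage_points_idx_separated pickQ Hx0.
- move=> y Sy; split; apply/closure_mballP => eps eps0;
    have [N Neps] := exists_natSinv_lt eps0;
    have [m [Nm [a S1a ya] [b S2b yb]]] := stage_points_near pickQ Hx0 N Sy;
    have Neps' : m.+1%:R^-1 <= eps by rewrite (le_trans (natSinv_le Nm))// ltW.
  + by exists a; split => //; rewrite (lt_le_trans ya).
  + by exists b; split => //; rewrite (lt_le_trans yb).
Qed.

End BorelOne.

(* Cover [f(F)] by a Stone refinement of the [e/4]-balls; by Baire some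
   layer [n] contains the image of a closed piece [H] of [F], and then
   [borel1_open_piece] puts the image of an open piece of [H] in a single
   [e/4]-ball. *)
Lemma borel1_fragmentable {R : realType} {X Y : metricType R} (f : X -> Y) :
  @hereditarily_baire X -> borel1 f -> fragmentable f.
Proof.
move=> hb b1 e e0 F cF F0.
have [V [oV Vball sepV covV]] :=
  @stone_refinement R Y (e / 4) (divr_gt0 e0 (ltr0Sn _ 3)).
have dV n s t y : V n s y -> V n t y -> s = t.
  move=> Vs Vt; apply: contrapT => st.
  by have := sepV _ _ _ _ _ st Vs Vt; rewrite mdistxx ltNge ltW // invr_gt0.
have [|||n [U [oU _ UF UFV]]] := @baire_Fsigma_cover _ F setT
    (fun n => f @^-1` \bigcup_(s in setT) V n s) (hb F cF F0) openT.
- by have [x Fx] := F0; exists x.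
- by move=> x [_ Fx]; have [n [s Vs]] := covV (f x); exists n => //; exists s.
- by move=> n; exact: borel1_bigcup_Fsigma b1 (oV n) setT.
have [|s [U' [oU' U'H U'V]]] :=
  borel1_open_piece hb b1 (oV n) (dV n) (@closed_closure _ (U `&` F)) _ UFV.
  by have [x UFx] := UF; exists x; apply: subset_closure.
exists (U' `&` U); split; first exact: openI.
split; first by have [y [U'y [Uy Fy]]] := open_meet_closure oU' U'H; exists y.
apply: (@le_lt_trans _ _ (e / 2)%:E); last by rewrite lte_fin; lra.
apply: diam_le => _ _ [z [[U'z Uz] Fz] <-] [z' [[U'z' Uz'] Fz'] <-].
have inU'H w : U' w -> U w -> F w -> (U' `&` closure (U `&` F)) w.
  by move=> U'w Uw Fw; split => //; apply: subset_closure.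
have /U'V/Vball/= sz := inU'H _ U'z Uz Fz.
have /U'V/Vball/= sz' := inU'H _ U'z' Uz' Fz'.
by have := metric_triangle (f z) s (f z'); rewrite (metric_sym (f z) s); lra.
Qed.

Theorem theorem2p4 (R : realType) (X Y : metricType R) (f : X -> Y) :
  (weakly_separated f <-> LTZ f) /\
  (weakly_separated f -> generalized_lebesgue_property f) /\
  (fragmentable f -> borel1 f) /\
  (@hereditarily_baire X -> borel1 f -> PCP f) /\
  (@hereditarily_baire X -> weakly_separated f -> fragmentable f) /\
  (@separable X -> generalized_lebesgue_property f -> lebesgue_property f).
Proof.
split; first by split; [exact: weakly_separated_LTZ | exact: LTZ_weakly_separated].
split; first exact: weakly_separated_gen_lebesgue.
split.
  move=> /fragmentable_weakly_separated/weakly_separated_gen_lebesgue.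
  exact: gen_lebesgue_borel1.
split; first by move=> hb /(borel1_fragmentable hb); exact: fragmentable_PCP.
split; first exact: weakly_separated_fragmentable.
exact: gen_lebesgue_lebesgue.
Qed.
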